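(* Let $(D,\mathrm{left},\mathrm{right})$ be an interval domain, $x\in D$ and $p\in\max(D)$. If $x\ll p$ in $D$, then $\mathrm{left}(x)\ll p\ll\mathrm{right}(x)$ in the poset $(\max(D),\le)$.
   Context: For a poset $(P,\sqsubseteq)$: directed sets are nonempty sets in which any two elements have an upper bound in the set; $\bigsqcup S$ is the supremum; $x\ll y$ iff for every directed $S\subseteq P$ with a supremum, $y\sqsubseteq\bigsqcup S$ implies $x\sqsubseteq s$ for some $s\in S$; $\Uparrow x=\{a: x\ll a\}$, $\Downarrow x=\{a:a\ll x\}$. $P$ is continuous if there is $B\subseteq P$ such that for each $x$, $B\cap\Downarrow x$ contains a directed set with supremum $x$; a continuous dcpo is a continuous poset in which every directed set has a supremum. $\max(P)$ is the set of maximal elements, $x\sqcap y$ the infimum of $\{x,y\}$. The Scott topology consists of upper sets $U$ such that $\bigsqcup S\in U$ implies $S\cap U\ne\emptyset$ for directed $S$. An interval poset is a poset $D$ with functions $\mathrm{left},\mathrm{right}:D\to\max(D)$ such that (only named infima are assumed to exist): (i) $x=\mathrm{left}(x)\sqcap\mathrm{right}(x)$ for all $x$; (ii) if $\mathrm{right}(x)=\mathrm{left}(y)$ then $\mathrm{left}(x\sqcap y)=\mathrm{left}(x)$ and $\mathrm{right}(x\sqcap y)=\mathrm{right}(y)$; (iii) for $p\in\max(D)$ with $x\sqsubseteq p$: $\mathrm{left}(\mathrm{left}(x)\sqcap p)=\mathrm{left}(x)$, $\mathrm{right}(\mathrm{left}(x)\sqcap p)=p$, $\mathrm{left}(p\sqcap\mathrm{right}(x))=p$,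 $\mathrm{right}(p\sqcap\mathrm{right}(x))=\mathrm{right}(x)$. On $\max(D)$ define $a\le b$ iff $a=\mathrm{left}(z)$, $b=\mathrm{right}(z)$ for some $z\in D$; this is a partial order, and $\ll$, $\bigvee$, $\bigwedge$ in $(\max(D),\le)$ refer to this order. For $p,q\in\max(D)$ let $[p,\cdot]=\mathrm{left}^{-1}(p)$ and $[\cdot,q]=\mathrm{right}^{-1}(q)$, regarded as subposets of $D$. An interval domain is an interval poset $(D,\mathrm{left},\mathrm{right})$ such that $D$ is a continuous dcpo and: (i) if $p\in\Uparrow x\cap\max(D)$ then $\Uparrow(\mathrm{left}(x)\sqcap p)\ne\emptyset$ and $\Uparrow(p\sqcap\mathrm{right}(x))\ne\emptyset$; (ii) for all $x\in D$ the following are equivalent: (a) $\Uparrow x\ne\emptyset$; (b) for all $y\in[\mathrm{left}(x),\cdot]$ with $y\sqsubseteq x$, $y\ll\mathrm{right}(y)$ in the poset $[\cdot,\mathrm{right}(y)]$; (c) for all $y\in[\cdot,\mathrm{right}(x)]$ with $y\sqsubseteq x$, $y\ll\mathrm{left}(y)$ in the poset $[\mathrm{left}(y),\cdot]$; (iii)(a) for every directed $S\subseteq[p,\cdot]$, $\mathrm{left}(\bigsqcup S)=p$ and $\mathrm{right}(\bigsqcup S)=\mathrm{right}(\bigsqcup T)$ for every directed $T\subseteq[q,\cdot]$ with $\mathrm{right}(T)=\mathrm{right}(S)$ (images); (iii)(b) for every directed $S\subseteq[\cdot,q]$, $\mathrm{right}(\bigsqcup S)=q$ and $\mathrm{left}(\bigsqcup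 S)=\mathrm{left}(\bigsqcup T)$ for every directed $T\subseteq[\cdot,p]$ with $\mathrm{left}(T)=\mathrm{left}(S)$; (iv) for all $x\in D$, $\{y\in\max(D): x\sqsubseteq y\}$ is compact in the relative Scott topology. *)

From Stdlib Require Import List.

Section Defs.
Variable D : Type.

Definition is_poset (le : D -> D -> Prop) : Prop :=
  (forall x, le x x) /\
  (forall x y, le x y -> le y x -> x = y) /\
  (forall x y z, le x y -> le y z -> le x z).

Definition allD : D -> Prop := fun _ => True.

Definition directed (R : D -> D -> Prop) (S A : D -> Prop) : Prop :=
  (forall a, A a -> S a) /\ (exists a, A a) /\
  (forall a b, A a -> A b -> exists c, A c /\ R a c /\ R b c).

Definition is_sup (R : D -> D -> Prop) (S A : D -> Prop) (s : D) : Prop :=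
  S s /\ (forall a, A a -> R a s) /\
  (forall u, S u -> (forall a, A a -> R a u) -> R s u).

Definition waybelow (R : D -> D -> Prop) (S : D -> Prop) (x y : D) : Prop :=
  forall (A : D -> Prop) (s : D), directed R S A -> is_sup R S A s -> R y s ->
    exists a, A a /\ R x a.

Definition is_inf (le : D -> D -> Prop) (a b z : D) : Prop :=
  le z a /\ le z b /\ (forall w, le w a -> le w b -> le w z).

Definition is_max (le : D -> D -> Prop) (x : D) : Prop :=
  forall y, le x y -> y = x.

(* the order on max(D): a <= b iff a = left z, b = right z for some z *)
Definition maxle (left right : D -> D) (a b : D) : Prop :=
  exists z, left z = a /\ right z = b.

Definition interval_poset (le : D -> D -> Prop) (left right : D -> D) : Prop :=
  is_poset le /\
  (forall x, is_max le (left x) /\ is_max le (right x)) /\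
  (forall x, is_inf le (left x) (right x) x) /\
  (forall x y, right x = left y ->
     exists z, is_inf le x y z /\ left z = left x /\ right z = right y) /\
  (forall x p, is_max le p -> le x p ->
     (exists z, is_inf le (left x) p z /\ left z = left x /\ right z = p) /\
     (exists z, is_inf le p (right x) z /\ left z = p /\ right z = right x)).

Definition dcpo (le : D -> D -> Prop) : Prop :=
  forall A, directed le allD A -> exists s, is_sup le allD A s.

Definition continuous_poset (le : D -> D -> Prop) : Prop :=
  exists B : D -> Prop, forall x, exists A : D -> Prop,
    (forall a, A a -> B a /\ waybelow le allD a x) /\
    directed le allD A /\ is_sup le allD A x.

Definition scott_open (le : D -> D -> Prop) (U : D -> Prop) : Prop :=
  (forall a b, U a -> le a b -> U b) /\
  (forall A s, directed le allD A -> is_sup le allD A s -> U s ->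
     exists a, A a /\ U a).

Definition scott_compact (le : D -> D -> Prop) (K : D -> Prop) : Prop :=
  forall (I : Type) (U : I -> D -> Prop),
    (forall i, scott_open le (U i)) ->
    (forall k, K k -> exists i, U i k) ->
    exists l : list I, forall k, K k -> exists i, In i l /\ U i k.

Definition interval_domain (le : D -> D -> Prop) (left right : D -> D) : Prop :=
  interval_poset le left right /\
  dcpo le /\ continuous_poset le /\
  (forall x p, is_max le p -> waybelow le allD x p ->
     (forall z, is_inf le (left x) p z -> exists a, waybelow le allD z a) /\
     (forall z, is_inf le p (right x) z -> exists a, waybelow le allD z a)) /\
  (forall x,
     ((exists a, waybelow le allD x a) <->
      (forall y, left y = left x -> le y x ->
         waybelow le (fun z => right z = right y) y (right y))) /\
     ((exists a, waybelow le allD x a) <->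
      (forall y, right y = right x -> le y x ->
         waybelow le (fun z => left z = left y) y (left y)))) /\
  (forall p S s, directed le (fun z => left z = p) S -> is_sup le allD S s ->
     left s = p /\
     (forall q T t, directed le (fun z => left z = q) T -> is_sup le allD T t ->
        (forall r, (exists a, S a /\ right a = r) <-> (exists a, T a /\ right a = r)) ->
        right s = right t)) /\
  (forall q S s, directed le (fun z => right z = q) S -> is_sup le allD S s ->
     right s = q /\
     (forall p T t, directed le (fun z => right z = p) T -> is_sup le allD T t ->
        (forall r, (exists a, S a /\ left a = r) <-> (exists a, T a /\ left a = r)) ->
        left s = left t)) /\
  (forall x, scott_compact le (fun y => is_max le y /\ le x y)).

End Defs.
Arguments allD {D}.

(* Pushing [x << p] to the endpoints: [left x ⊓ p] and [p ⊓ right x] are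
   intervals with something way above them, so it suffices that
   [left z << right z] in [max(D)] whenever [z] has something way above it.
   For that, a directed family [A] of maximal elements with supremum
   [s >= right z] is lifted to the directed family of intervals [[a, s]],
   [a] in [A], whose supremum [t] in [D] has [left t = right t = s].  Shrinking
   [z] to the interval [[left z, s]] below it, axiom (ii) of interval domains
   makes it way below [s] in [[., s]], hence below some [[a, s]], and taking
   left endpoints gives [left z <= a]. *)

Section WayBelow.
Variables (D : Type) (R : D -> D -> Prop) (S : D -> Prop).

Lemma directed_allD (A : D -> Prop) : directed D R S A -> directed D R allD A.
Proof. intros [_ HA]. split; [intros; exact I | exact HA]. Qed.

Lemma is_sup_allD_in (A : D -> Prop) (t : D) :
  is_sup D R allD A t -> S t -> is_sup D R S A t.
Proof.
  intros [_ [Hub Hleast]] Ht. split; [exact Ht|]. split; [exact Hub|].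
  intros u _ Hu. exact (Hleast u I Hu).
Qed.

Lemma waybelow_le (x y : D) :
  (forall a, R a a) -> S y -> waybelow D R S x y -> R x y.
Proof.
  intros Hrefl Hy Hxy.
  destruct (Hxy (fun a => a = y) y) as [a [-> Hxa]]; [| | apply Hrefl | exact Hxa].
  - split; [intros a -> ; exact Hy|]. split; [exists y; reflexivity|].
    intros a b -> ->. exists y. auto.
  - split; [exact Hy|]. split; [intros a -> ; apply Hrefl|]. intros u _ Hu. now apply Hu.
Qed.

End WayBelow.

Section IntervalPoset.
Variables (D : Type) (le : D -> D -> Prop) (left right : D -> D).

Local Notation mle := (maxle D left right).
Local Notation Max := (is_max D le).

Hypothesis le_refl : forall x, le x x.
Hypothesis le_antisym : forall x y, le x y -> le y x -> x = y.
Hypothesis le_trans : forall x y z, le x y -> le y z -> le x z.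
Hypothesis left_max : forall x, Max (left x).
Hypothesis inf_left_right : forall x, is_inf D le (left x) (right x) x.
Hypothesis inf_glue : forall x y, right x = left y ->
  exists z, is_inf D le x y z /\ left z = left x /\ right z = right y.
Hypothesis inf_restrict : forall x p, Max p -> le x p ->
  (exists z, is_inf D le (left x) p z /\ left z = left x /\ right z = p) /\
  (exists z, is_inf D le p (right x) z /\ left z = p /\ right z = right x).

Lemma interval_ext a b : left a = left b -> right a = right b -> a = b.
Proof.
  intros El Er. destruct (inf_left_right a) as [a1 [a2 a3]].
  destruct (inf_left_right b) as [b1 [b2 b3]].
  apply le_antisym.
  - apply b3; [rewrite <- El | rewrite <- Er]; assumption.
  - apply a3; [rewrite El | rewrite Er]; assumption.
Qed.

Lemma le_endpoints s t : left t = s -> right t = s -> le s t.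
Proof.
  intros El Er. destruct (inf_left_right t) as [_ [_ Hglb]].
  apply Hglb; rewrite ?El, ?Er; apply le_refl.
Qed.

Lemma le_of_mle_left q1 q2 :
  mle (left q1) (left q2) -> right q1 = right q2 -> le q1 q2.
Proof.
  intros [w [Ew1 Ew2]] Er.
  destruct (inf_glue w q2 Ew2) as [r [[_ [Hrq2 _]] [Er1 Er2]]].
  replace q1 with r; [exact Hrq2|].
  apply interval_ext; congruence.
Qed.

Lemma mle_left_of_le z t : le z t -> mle (left z) (left t).
Proof.
  intros Hzt. destruct (inf_left_right t) as [Ht _].
  destruct (inf_restrict z (left t) (left_max t) (le_trans _ _ _ Hzt Ht))
    as [[r [_ [Er1 Er2]]] _].
  exists r. auto.
Qed.

Lemma mle_antisym a b : Max a -> mle a b -> mle b a -> a = b.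
Proof.
  intros Ha [z1 [E11 E12]] [z2 [E21 E22]].
  destruct (inf_glue z1 z2 (eq_trans E12 (eq_sym E21))) as [r [[Hrz1 _] [Er1 Er2]]].
  assert (Har : le a r) by (apply le_endpoints; congruence).
  destruct (inf_left_right z1) as [_ [Hz1 _]].
  symmetry. apply Ha. rewrite <- E12. eauto.
Qed.

Hypothesis dcpo_le : dcpo D le.
Hypothesis right_sup : forall q A t,
  directed D le (fun z => right z = q) A -> is_sup D le allD A t -> right t = q.
Hypothesis waybelow_right_of_waybelow : forall x,
  (exists a, waybelow D le allD x a) ->
  forall y, left y = left x -> le y x ->
    waybelow D le (fun z => right z = right y) y (right y).

Definition intervals_ending_at (A : D -> Prop) (s : D) : D -> Prop :=
  fun q => right q = s /\ A (left q).

Lemma intervals_ending_at_directed A s :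
  directed D mle Max A -> (forall a, A a -> mle a s) ->
  directed D le (fun q => right q = s) (intervals_ending_at A s).
Proof.
  intros [_ [[a0 Ha0] HAdir]] Hs.
  assert (Hlift : forall a, A a -> exists q, intervals_ending_at A s q /\ left q = a).
  { intros a Ha. destruct (Hs a Ha) as [q [Eq1 Eq2]].
    exists q. unfold intervals_ending_at. rewrite Eq1. auto. }
  split; [intros q [Hq _]; exact Hq|]. split.
  - destruct (Hlift a0 Ha0) as [q [Hq _]]. eauto.
  - intros q1 q2 [Hq1 A1] [Hq2 A2].
    destruct (HAdir _ _ A1 A2) as [a3 [A3 [M1 M2]]].
    destruct (Hlift a3 A3) as [q3 [[Hq3 Aq3] Eq3]].
    exists q3. repeat split; try assumption;
      apply le_of_mle_left; congruence.
Qed.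

Lemma left_sup_intervals_ending_at A s t :
  directed D mle Max A -> is_sup D mle Max A s ->
  is_sup D le allD (intervals_ending_at A s) t -> left t = s.
Proof.
  intros HA [Hs [Hub Hleast]] Ht.
  assert (Hrt : right t = s)
    by exact (right_sup s _ t (intervals_ending_at_directed A s HA Hub) Ht).
  symmetry. apply mle_antisym; [exact Hs | | exists t; auto].
  apply Hleast; [apply left_max|]. intros a Ha.
  destruct (Hub a Ha) as [q [Eq1 Eq2]].
  rewrite <- Eq1. apply mle_left_of_le, (proj1 (proj2 Ht)).
  split; [exact Eq2 | rewrite Eq1; exact Ha].
Qed.

Lemma left_waybelow_right z :
  (exists c, waybelow D le allD z c) -> waybelow D mle Max (left z) (right z).
Proof.
  intros Hz A s HA HAs [w [Ew1 Ew2]].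
  destruct (inf_glue z w (eq_sym Ew1)) as [y [[Hyz _] [Ey1 Ey2]]].
  assert (Hys := waybelow_right_of_waybelow z Hz y Ey1 Hyz).
  rewrite Ey2, Ew2 in Hys.
  assert (HT := intervals_ending_at_directed A s HA (proj1 (proj2 HAs))).
  destruct (dcpo_le _ (directed_allD _ _ _ _ HT)) as [t Ht].
  assert (Hlt := left_sup_intervals_ending_at A s t HA HAs Ht).
  assert (Hrt := right_sup s _ t HT Ht).
  destruct (Hys _ t HT (is_sup_allD_in _ _ _ _ _ Ht Hrt) (le_endpoints s t Hlt Hrt))
    as [q [[_ Aq] Hyq]].
  exists (left q). split; [exact Aq|].
  rewrite <- Ey1. exact (mle_left_of_le y q Hyq).
Qed.

Hypothesis restrict_waybelow : forall x p, Max p -> waybelow D le allD x p ->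
  (forall z, is_inf D le (left x) p z -> exists a, waybelow D le allD z a) /\
  (forall z, is_inf D le p (right x) z -> exists a, waybelow D le allD z a).

Lemma waybelow_max_endpoints x p :
  Max p -> waybelow D le allD x p ->
  waybelow D mle Max (left x) p /\ waybelow D mle Max p (right x).
Proof.
  intros Hp Hxp.
  assert (Hxle : le x p) by exact (waybelow_le D le allD x p le_refl I Hxp).
  destruct (inf_restrict x p Hp Hxle) as [[z0 [Iz0 [El0 Er0]]] [z1 [Iz1 [El1 Er1]]]].
  destruct (restrict_waybelow x p Hp Hxp) as [Hz0 Hz1].
  split.
  - rewrite <- El0, <- Er0. exact (left_waybelow_right z0 (Hz0 z0 Iz0)).
  - rewrite <- El1, <- Er1. exact (left_waybelow_right z1 (Hz1 z1 Iz1)).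
Qed.

End IntervalPoset.

Theorem mainTheorem9 (D : Type) (le : D -> D -> Prop) (left right : D -> D)
  (HD : interval_domain D le left right) (x p : D) (Hp : is_max D le p)
  (Hxp : waybelow D le allD x p) :
  waybelow D (maxle D left right) (is_max D le) (left x) p /\
  waybelow D (maxle D left right) (is_max D le) p (right x).
Proof.
  destruct HD as [[[Hrefl [Hanti Htrans]] [Hmax [Hinf [Hglue Hrestr]]]]
                  [Hdcpo [_ [Hi [Hii [_ [Hiiib _]]]]]]].
  apply (waybelow_max_endpoints D le left right Hrefl Hanti Htrans
           (fun y => proj1 (Hmax y)) Hinf Hglue Hrestr Hdcpo
           (fun q A t HA Ht => proj1 (Hiiib q A t HA Ht))
           (fun y => proj1 (proj1 (Hii y))) Hi); assumption.
Qed.
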